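(* Let $n>0$ and let $u$ generate a cyclic group of $2$-power order $q\ge 2n$. If every Jordan block size of $u$ on $\wedge^2(V_{2n})$ has multiplicity at most $2$, then $n\in\{1,2,3,5\}$.
   Context: $K$ is an algebraically closed field of characteristic 2; $V_d$ is the $d$-dimensional indecomposable $K[u]$-module (one unipotent Jordan block of size $d$). *)

From HB Require Import structures.
From mathcomp Require Import all_boot all_order all_algebra.
Set Implicit Arguments. Unset Strict Implicit. Unset Printing Implicit Defensive.
Import GRing.Theory.
Local Open Scope ring_scope.

Definition jordan_unip (R : nzRingType) (m : nat) : 'M[R]_m :=
  \matrix_(i < m, j < m) (((i : nat) == j) || (j == i.+1 :> nat))%:R.

(* Index set of the standard basis e_i /\ e_j (i < j) of the exterior square. *)
Definition ext2_idx (m : nat) : finType := {x : 'I_m * 'I_m | (x.1 < x.2)%N}.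

(* Matrix of the induced map on /\^2 : e_k /\ e_l |-> A e_k /\ A e_l,
   coefficient on e_i /\ e_j is A_ik A_jl - A_il A_jk. *)
Definition ext2 (R : comNzRingType) (m : nat) (A : 'M[R]_m)
  : 'M[R]_#|ext2_idx m| :=
  \matrix_(a, b)
    let ij := val (enum_val a) in let kl := val (enum_val b) in
    A ij.1 kl.1 * A ij.2 kl.2 - A ij.1 kl.2 * A ij.2 kl.1.

Definition mxpow (R : nzRingType) (N : nat) (B : 'M[R]_N) (k : nat) : 'M[R]_N :=
  iter k (mulmx B) 1%:M.

(* Number of Jordan blocks of size at least d of a unipotent matrix A
   (= rank (A-1)^(d-1) - rank (A-1)^d), and of size exactly d. *)
Definition jblocks_ge (F : fieldType) (N : nat) (A : 'M[F]_N) (d : nat) : nat :=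
  (\rank (mxpow (A - 1%:M) d.-1) - \rank (mxpow (A - 1%:M) d))%N.

Definition jblock_mult (F : fieldType) (N : nat) (A : 'M[F]_N) (d : nat) : nat :=
  (jblocks_ge A d - jblocks_ge A d.+1)%N.

From HB Require Import structures.
From mathcomp Require Import all_boot all_order all_algebra.
From mathcomp Require Import zify.
Import GRing.Theory.
Local Open Scope ring_scope.

(* Write e_1, ..., e_m for the basis with J e_i = e_i + e_(i-1) (e_0 = 0) and
   Nu = U - 1 for the nilpotent part of U = /\^2 J. In characteristic 2, Nu^(2^t)
   maps e_i /\ e_j to e_(i-2^t) /\ e_j + e_i /\ e_(j-2^t) + e_(i-2^t) /\ e_(j-2^t),
   so every power of Nu acts combinatorially on the basis e_i /\ e_j.
   Let 2^s < m = 2n <= 2^(s+1); then Nu^(2^(s+1)) = 0.  If m >= 2^s + 4, the images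
   under Nu^(2^(s+1)-1) of e_(2^s+i+1) /\ e_(2^s+i+2), i < 3, are triangular with
   respect to the e_(i+1) /\ e_(i+2), which yields three Jordan blocks of the
   maximal size 2^(s+1).  Otherwise m = 2^s + 2: for s >= 4 the same vectors (with
   2^(s-1) and i < 5) yield five blocks of size at least 2^s, while the image of
   Nu^(2^s) lies in an explicit space of dimension 2^(s+1) - 2 on which Nu has rank
   at least 2^(s+1) - 4, so at most two blocks are longer than 2^s.  This leaves
   m in {2, 4, 6, 10}. *)

Section MxPow.
Variables (R : nzRingType) (n : nat) (M : 'M[R]_n).

Lemma mxpowS k : mxpow M k.+1 = M *m mxpow M k.
Proof. by []. Qed.

Lemma mxpowD a b : mxpow M (a + b) = mxpow M a *m mxpow M b.
Proof.
elim: a => [|a IH]; first by rewrite add0n /mxpow /= mul1mx.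
by rewrite addSn !mxpowS IH mulmxA.
Qed.

End MxPow.

Section RankBounds.
Context {F : fieldType}.

Lemma mxrank_pivot {r k n} {X : 'M[F]_(r, n)} (f : 'I_k -> 'I_r) :
  (forall i, exists c, X (f i) c != 0 /\ forall j : 'I_k, (j < i)%N -> X (f j) c = 0) ->
  (k <= \rank X)%N.
Proof.
move=> /fin_all_exists[piv Xpiv].
set S := rowsub f X *m \matrix_(c, j) (c == piv j)%:R.
have Se i j : S i j = X (f i) (piv j).
  rewrite mxE (bigD1 (piv j)) //= !mxE eqxx mulr1 big1 ?addr0 // => c /negbTE nc.
  by rewrite !mxE nc mulr0.
have S_unit : S \in unitmx.
  rewrite unitmxE det_trig; last by apply/is_trig_mxP => i j ij; rewrite Se (Xpiv j).2.
  by rewrite unitfE; apply/prodf_neq0 => i _; rewrite Se (Xpiv i).1.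
rewrite -(mxrank_unit S_unit); apply: leq_trans (mxrankM_maxl _ _) _.
exact: mxrankS (rowsub_sub f X).
Qed.

Context {N : nat}.

Lemma rows_trE k (v : 'I_k -> 'cV[F]_N) i c : (\matrix_(i < k) (v i)^T) i c = v i c 0.
Proof. by rewrite !mxE. Qed.

Lemma mulmx_rows_tr k (v : 'I_k -> 'cV[F]_N) (M : 'M[F]_N) :
  \matrix_(i < k) (v i)^T *m M^T = \matrix_(i < k) (M *m v i)^T.
Proof. by apply/row_matrixP => i; rewrite row_mul !rowK trmx_mul. Qed.

Context {A : 'M[F]_N}.
Local Notation B := (A - 1%:M).

Lemma jblocks_geSE d : jblocks_ge A d.+1 = \rank ((mxpow B d)^T :&: kermx B^T)%MS.
Proof.
rewrite /jblocks_ge succnK mxpowS -(mxrank_tr (B *m _)) trmx_mul.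
by rewrite -(mxrank_tr (mxpow B d)) -(mxrank_mul_ker _ B^T) addKn.
Qed.

Lemma jblocks_ge_lower {d k} {v : 'I_k -> 'cV[F]_N} :
  (forall i, mxpow B d.+1 *m v i = 0) ->
  (\rank (\matrix_(i < k) (mxpow B d *m v i)^T) <= jblocks_ge A d.+1)%N.
Proof.
move=> v_ker; rewrite jblocks_geSE; apply: mxrankS.
rewrite sub_capmx; apply/andP; split; apply/row_subP => i; rewrite rowK trmx_mul.
  exact: submxMl.
by apply/sub_kermxP; rewrite -mulmxA -trmx_mul -mxpowS -trmx_mul v_ker trmx0.
Qed.

Lemma jblocks_ge_upper {d r} {Y : 'M[F]_(r, N)} : ((mxpow B d)^T <= Y)%MS ->
  (jblocks_ge A d.+1 <= \rank Y - \rank (Y *m B^T))%N.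
Proof.
move=> sub_Y; rewrite jblocks_geSE -(mxrank_mul_ker Y B^T) addKn.
exact/mxrankS/capmxS.
Qed.

Lemma jblocks_ge_eq0 {d} : mxpow B d = 0 -> jblocks_ge A d.+1 = 0%N.
Proof. by move=> B0; rewrite jblocks_geSE B0 trmx0 cap0mx mxrank0. Qed.

End RankBounds.

Section Counting.
Local Open Scope nat_scope.

Lemma count_orb_disj (T : Type) (a b : pred T) s : (forall x, a x -> ~~ b x) ->
  count (fun x => a x || b x) s = count a s + count b s.
Proof.
move=> ab; rewrite -count_predUI [count (predI _ _) _](eq_count (a2 := pred0)).
  by rewrite count_pred0 addn0.
by move=> x /=; apply/negbTE/andP => -[/ab/negP].
Qed.

Lemma count_sub_pair (s : seq (nat * nat)) (i j x y : nat) : 0 < x -> 0 < y ->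
  count (fun uv => (x == i - uv.1) && (y == j - uv.2)) s =
  if (x <= i) && (y <= j) then count (pred1 (i - x, j - y)) s else 0.
Proof.
move=> x_gt0 y_gt0; case: ifP => [/andP[xi yj]|nxy].
  apply: eq_count => -[u v] /=; rewrite xpair_eqE.
  by apply/andP/andP => -[/eqP ? /eqP ?]; split; apply/eqP; lia.
rewrite (eq_count (a2 := pred0)) ?count_pred0 // => -[u v] /=.
by apply/negbTE/andP => -[/eqP ex /eqP ey]; move: nxy; rewrite ex ey !leq_subr.
Qed.

Definition shift_pairs (a b : nat) (s : seq (nat * nat)) : seq (nat * nat) :=
  [seq (uv.1 + a, uv.2 + b) | uv <- s].

(* Nu^(2^T - 1) is the product of the Nu^(2^r), r < T, each of which lowers the
   first index, the second one, or both by 2^r: [wedge_shifts T] lists the total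
   shifts (u, v), namely the pairs u, v < 2^T whose binary digits cover 0..T-1. *)
Fixpoint wedge_shifts (T : nat) : seq (nat * nat) :=
  if T is T'.+1 then
    let s := wedge_shifts T' in
    shift_pairs (2 ^ T') 0 s ++ shift_pairs 0 (2 ^ T') s ++ shift_pairs (2 ^ T') (2 ^ T') s
  else [:: (0, 0)].

Lemma wedge_shifts_bounds T uv : uv \in wedge_shifts T ->
  [&& uv.1 < 2 ^ T, uv.2 < 2 ^ T & (2 ^ T).-1 <= uv.1 + uv.2].
Proof.
elim: T uv => [|T IH] [u v] /=; first by rewrite inE => /eqP[-> ->].
rewrite !mem_cat => /or3P[] /mapP[[u' v'] /IH /and3P[/= lu lv luv] [-> ->]] /=;
  rewrite expnS; lia.
Qed.

Lemma count_shift_pairs a b x y s :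
  count (pred1 (x, y)) (shift_pairs a b s) =
  if (a <= x) && (b <= y) then count (pred1 (x - a, y - b)) s else 0.
Proof.
rewrite count_map; case: ifP => [/andP[ax b_y]|nxy].
  apply: eq_count => -[u v] /=; rewrite !xpair_eqE.
  by apply/andP/andP => -[/eqP ? /eqP ?]; split; apply/eqP; lia.
rewrite (eq_count (a2 := pred0)) ?count_pred0 // => -[u v] /=.
by apply/negbTE/negP => /eqP[ex ey]; move: nxy; rewrite -ex -ey !leq_addl.
Qed.

Lemma count_wedge_shiftsS T x y :
  count (pred1 (x, y)) (wedge_shifts T.+1) =
    (if 2 ^ T <= x then count (pred1 (x - 2 ^ T, y)) (wedge_shifts T) else 0)
  + (if 2 ^ T <= y then count (pred1 (x, y - 2 ^ T)) (wedge_shifts T) else 0)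
  + (if (2 ^ T <= x) && (2 ^ T <= y) then
       count (pred1 (x - 2 ^ T, y - 2 ^ T)) (wedge_shifts T) else 0).
Proof. by rewrite /= !count_cat !count_shift_pairs !leq0n andbT !subn0 addnA. Qed.

Lemma count_wedge_shifts_eq0 T x y :
  [|| x + y < (2 ^ T).-1, 2 ^ T <= x | 2 ^ T <= y] ->
  count (pred1 (x, y)) (wedge_shifts T) = 0.
Proof.
move=> xy; apply/count_memPn/negP => /wedge_shifts_bounds /and3P[/= lx ly lxy].
by case/or3P: xy; lia.
Qed.

Lemma count_wedge_shifts_full T y : y < 2 ^ T ->
  count (pred1 ((2 ^ T).-1, y)) (wedge_shifts T) = 1.
Proof.
elim: T y => [|T IH] y yT; first by case: y yT.
have -> : (2 ^ T.+1).-1 = 2 ^ T + (2 ^ T).-1.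
  by have := expn_gt0 2 T; rewrite expnS; lia.
rewrite count_wedge_shiftsS leq_addr addKn andTb.
rewrite (count_wedge_shifts_eq0 _ (2 ^ T + _)) ?leq_addr ?orbT //.
have [hy|hy] := leqP (2 ^ T) y.
  rewrite (count_wedge_shifts_eq0 _ _ y) ?hy ?orbT // IH //.
  by move: yT; rewrite expnS; lia.
by rewrite !addn0 IH.
Qed.

End Counting.

Lemma cross_terms_cancel (V : zmodType) (a b c d e f : V) :
  (forall v : V, v + v = 0) -> (a + b + c) + (b + d + e) + (c + e + f) = a + d + f.
Proof.
move=> vv; rewrite !addrA [LHS](ACl (1*5*9*(2*4)*(3*7)*(6*8)))%AC /=.
by rewrite !vv !addr0.
Qed.

Ltac decide_nat_eqs := repeat match goal with
  | |- context [(?a == ?b)%N] =>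
    first [ rewrite (_ : (a == b)%N = true); last (by apply/eqP; lia)
          | rewrite (_ : (a == b)%N = false); last (by apply/eqP; lia) ] end.

Section WedgeJordan.
Context {K : fieldType} {m : nat}.
Hypothesis char2 : (2%:R : K) = 0.
Local Notation N := #|ext2_idx m|.
Local Notation U := (ext2 (jordan_unip K m)).
Local Notation Nu := (U - 1%:M).

Definition wlo (b : 'I_N) : nat := (val (enum_val b)).1.
Definition whi (b : 'I_N) : nat := (val (enum_val b)).2.

Lemma wlo_lt_whi b : (wlo b < whi b)%N.
Proof. exact: (valP (enum_val b)). Qed.

Lemma whi_lt b : (whi b < m)%N.
Proof. exact: ltn_ord. Qed.

Lemma wlo_whi_inj b c : wlo b = wlo c -> whi b = whi c -> b = c.
Proof.
rewrite /wlo /whi => elo ehi; apply/enum_val_inj/val_inj.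
by move: elo ehi; case: (val _) => ? ?; case: (val _) => ? ? /= /val_inj-> /val_inj->.
Qed.

Definition wedge_idx {p q} (pq : (p < q)%N) (qm : (q < m)%N) : 'I_N :=
  enum_rank (exist (fun x : 'I_m * 'I_m => (x.1 < x.2)%N)
    (Ordinal (ltn_trans pq qm), Ordinal qm) pq : ext2_idx m).

Lemma wlo_wedge_idx {p q} pq qm : wlo (@wedge_idx p q pq qm) = p.
Proof. by rewrite /wlo enum_rankK. Qed.

Lemma whi_wedge_idx {p q} pq qm : whi (@wedge_idx p q pq qm) = q.
Proof. by rewrite /whi enum_rankK. Qed.

Definition wedge_hit (b : 'I_N) (i j : nat) : bool :=
  ((wlo b).+1 == i) && ((whi b).+1 == j) || ((wlo b).+1 == j) && ((whi b).+1 == i).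

(* [wedge i j] is the coordinate vector of e_i /\ e_j: the 1-based indexing makes
   [wedge 0 j = 0] stand for e_0 = 0, and no signs are needed in characteristic 2. *)
Definition wedge (i j : nat) : 'cV[K]_N := \col_b (wedge_hit b i j)%:R.

Lemma wedge_coord b i j : wedge i j b 0 = (wedge_hit b i j)%:R.
Proof. by rewrite mxE. Qed.

Lemma wedgeC i j : wedge i j = wedge j i.
Proof. by apply/matrixP => b z; rewrite !mxE /wedge_hit orbC. Qed.

Lemma wedge0l j : wedge 0 j = 0.
Proof. by apply/matrixP => b z; rewrite !mxE /wedge_hit !andbF. Qed.

Lemma wedge0r i : wedge i 0 = 0.
Proof. by rewrite wedgeC wedge0l. Qed.

Lemma wedgexx i : wedge i i = 0.
Proof.
apply/matrixP => b z; rewrite !mxE /wedge_hit; have := wlo_lt_whi b.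
by case: eqP => [e1|] //=; case: eqP => [e2|] //=; lia.
Qed.

Lemma wedge_delta b : wedge (wlo b).+1 (whi b).+1 = delta_mx b 0.
Proof.
apply/matrixP => c z; rewrite !mxE /wedge_hit !eqSS ord1 eqxx andbT.
have -> : (wlo c == whi b) && (whi c == wlo b) = false.
  by have := wlo_lt_whi b; have := wlo_lt_whi c; do 2?case: eqP => ? //=; lia.
rewrite orbF; congr (nat_of_bool _ )%:R.
by apply/andP/eqP => [[/eqP + /eqP]|->]; [exact: wlo_whi_inj | rewrite !eqxx].
Qed.

Lemma addmx_char2 r c (x : 'M[K]_(r, c)) : x + x = 0.
Proof. by rewrite -mulr2n -scaler_nat char2 scale0r. Qed.

Lemma ext2_jordan_coord a b : U a b =
  (((wlo a == wlo b) || (wlo b == (wlo a).+1)) &&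
   ((whi a == whi b) || (whi b == (whi a).+1)))%:R.
Proof.
rewrite mxE /= !mxE -!natrM !mulnb -/(wlo a) -/(whi a) -/(wlo b) -/(whi b).
have := wlo_lt_whi a; have := wlo_lt_whi b.
move: (wlo a) (whi a) (wlo b) (whi b) => x y x' y' hb ha.
rewrite [X in _ - (nat_of_bool X)%:R](_ : _ = false) ?subr0 //.
by apply/negP => /andP[/orP[/eqP|/eqP] ? /orP[/eqP|/eqP] ?]; lia.
Qed.

Lemma U_wedge i j : (i <= m)%N -> (j <= m)%N ->
  U *m wedge i j = wedge i j + wedge i.-1 j + wedge i j.-1 + wedge i.-1 j.-1.
Proof.
wlog ij : i j / (i <= j)%N => [sym im jm|].
  have [/sym-> //|/ltnW ji] := leqP i j.
  rewrite wedgeC sym // !(wedgeC j) !(wedgeC j.-1); congr (_ + _); exact: addrAC.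
have [<-|ne] := eqVneq i j.
  by rewrite !wedgexx mulmx0 addr0 add0r (wedgeC i) addmx_char2.
case: i ij ne => [|i] ij ne im jm; first by rewrite !wedge0l mulmx0 !addr0.
case: j ij ne jm => [|j] // ij ne jm.
have {ij ne} lt_ij : (i < j)%N by rewrite ltn_neqAle -eqSS ne.
rewrite -(whi_wedge_idx lt_ij jm) -{1}(wlo_wedge_idx lt_ij jm) wedge_delta -colE.
apply/matrixP => a z; rewrite ord1 [LHS]mxE ext2_jordan_coord !mxE wlo_wedge_idx whi_wedge_idx.
rewrite /wedge_hit -!natrD; congr (_%:R); have := wlo_lt_whi a.
by move: (wlo a) (whi a) => x y xy /=; repeat case: eqP => ? /=; lia.
Qed.

Lemma Nu_wedge i j : (i <= m)%N -> (j <= m)%N ->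
  Nu *m wedge i j = wedge i.-1 j + wedge i j.-1 + wedge i.-1 j.-1.
Proof.
move=> im jm; rewrite mulmxBl mul1mx U_wedge // -!addrA addrC -!addrA.
by rewrite addNr addr0.
Qed.

Lemma Nu_pow2_wedge t i j : (i <= m)%N -> (j <= m)%N ->
  mxpow Nu (2 ^ t) *m wedge i j =
  wedge (i - 2 ^ t) j + wedge i (j - 2 ^ t) + wedge (i - 2 ^ t) (j - 2 ^ t).
Proof.
elim: t i j => [|t IH] i j im jm; first by rewrite mxpowS mulmx1 !subn1 Nu_wedge.
have im' : (i - 2 ^ t <= m)%N by rewrite (leq_trans (leq_subr _ _)).
have jm' : (j - 2 ^ t <= m)%N by rewrite (leq_trans (leq_subr _ _)).
rewrite expnS mul2n -addnn mxpowD -mulmxA IH // !mulmxDr !IH // !subnDA.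
exact/cross_terms_cancel/addmx_char2.
Qed.

Lemma Nu_pow2_wedge_eq0 t i j : (i <= 2 ^ t)%N -> (j <= 2 ^ t)%N ->
  (i <= m)%N -> (j <= m)%N -> mxpow Nu (2 ^ t) *m wedge i j = 0.
Proof.
move=> it jt im jm; rewrite Nu_pow2_wedge //.
by rewrite (eqP it) (eqP jt) !wedge0l wedge0r !addr0.
Qed.

Lemma Nu_pow2_eq0 {t} : (m <= 2 ^ t)%N -> mxpow Nu (2 ^ t) = 0.
Proof.
move=> mt; apply/matrixP => a b; rewrite [RHS]mxE.
have -> : mxpow Nu (2 ^ t) a b = (mxpow Nu (2 ^ t) *m delta_mx b (0 : 'I_1)) a 0.
  by rewrite -colE mxE.
have := wlo_lt_whi b; have := whi_lt b => hb lb.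
by rewrite -wedge_delta Nu_pow2_wedge_eq0 ?mxE //; lia.
Qed.

Lemma Nu_pow2m1_wedge T i j : (i <= m)%N -> (j <= m)%N ->
  mxpow Nu (2 ^ T).-1 *m wedge i j =
  \sum_(uv <- wedge_shifts T) wedge (i - uv.1) (j - uv.2).
Proof.
elim: T i j => [|T IH] i j im jm; first by rewrite /mxpow /= mul1mx big_seq1 !subn0.
have -> : ((2 ^ T.+1).-1 = (2 ^ T).-1 + 2 ^ T)%N.
  by have := expn_gt0 2 T; rewrite expnS; lia.
have im' : (i - 2 ^ T <= m)%N by rewrite (leq_trans (leq_subr _ _)).
have jm' : (j - 2 ^ T <= m)%N by rewrite (leq_trans (leq_subr _ _)).
rewrite mxpowD -mulmxA Nu_pow2_wedge // !mulmxDr !IH // /= !big_cat !big_map /= addrA.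
by congr (_ + _ + _); apply: eq_bigr => uv _; congr wedge; lia.
Qed.

Lemma wedge_sum_coord (I : Type) (s : seq I) (f g : I -> nat) b :
  (\sum_(x <- s) wedge (f x) (g x)) b 0 = (count (fun x => wedge_hit b (f x) (g x)) s)%:R.
Proof.
elim: s => [|x s IH]; first by rewrite big_nil mxE.
by rewrite big_cons mxE IH wedge_coord /= natrD.
Qed.

Lemma Nu_pow2m1_wedge_coord T i j p q (pq : (p < q)%N) (qm : (q < m)%N) :
  (i <= m)%N -> (j <= m)%N ->
  (mxpow Nu (2 ^ T).-1 *m wedge i j) (wedge_idx pq qm) 0 =
  ((if (p < i) && (q < j) then count (pred1 (i - p.+1, j - q.+1)) (wedge_shifts T) else 0)
   + (if (q < i) && (p < j) then count (pred1 (i - q.+1, j - p.+1)) (wedge_shifts T) else 0)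
  )%N%:R.
Proof.
move=> im jm; rewrite Nu_pow2m1_wedge // wedge_sum_coord /wedge_hit.
rewrite wlo_wedge_idx whi_wedge_idx count_orb_disj; last first.
  by move=> uv /andP[/eqP ? /eqP ?]; apply/negP => /andP[/eqP ? /eqP ?]; lia.
rewrite (@eq_count _ (fun uv => (p.+1 == j - uv.2)%N && (q.+1 == i - uv.1)%N)
  (fun uv => (q.+1 == i - uv.1)%N && (p.+1 == j - uv.2)%N)) => [|uv]; last exact: andbC.
by rewrite !count_sub_pair.
Qed.

Lemma Nu_pow2m1_wedge_pivot t a c (cm : (c.+1 < m)%N) :
  (0 < t)%N -> (a <= c)%N -> (2 ^ t + a + 2 <= m)%N ->
  (mxpow Nu (2 ^ t.+1).-1 *m wedge (2 ^ t + a + 1) (2 ^ t + a + 2))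
    (wedge_idx (ltnSn c) cm) 0 = (a == c)%:R.
Proof.
move=> t_gt0 ac am; have t2 : (2 <= 2 ^ t)%N by rewrite -[2%N]/(2 ^ 1)%N leq_pexp2l.
rewrite Nu_pow2m1_wedge_coord; try lia.
have [<-|ne] := eqVneq a c.
  (* Only the swapped term survives: (2^t - 1, 2^t + 1) = (2^t - 1, 1) + (0, 2^t). *)
  rewrite !ifT; try by apply/andP; split; lia.
  have -> : (2 ^ t + a + 1 - a.+1 = 2 ^ t)%N by lia.
  have -> : (2 ^ t + a + 2 - a.+2 = 2 ^ t)%N by lia.
  have -> : (2 ^ t + a + 1 - a.+2 = (2 ^ t).-1)%N by lia.
  have -> : (2 ^ t + a + 2 - a.+1 = (2 ^ t).+1)%N by lia.
  have t_gt : (2 ^ t <= (2 ^ t).-1)%N = false by apply/negbTE; rewrite -ltnNge; lia.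
  rewrite !count_wedge_shiftsS leqnn leqnSn t_gt subnn /= !addn0.
  rewrite (count_wedge_shifts_eq0 _ _ 0) ?leqnn ?orbT //.
  rewrite (count_wedge_shifts_eq0 _ 0) ?leqnn ?orbT //.
  rewrite (count_wedge_shifts_eq0 _ 0 0) /=; last by rewrite addn0; lia.
  by rewrite subSnn count_wedge_shifts_full.
(* Off the diagonal both candidate shifts have total below 2^(t+1) - 1. *)
have small x y : (x + y < (2 ^ t.+1).-1)%N ->
    count (pred1 (x, y)) (wedge_shifts t.+1) = 0%N.
  by move=> xy; rewrite count_wedge_shifts_eq0 ?xy.
by rewrite !small ?if_same //; move: (expnS 2 t); lia.
Qed.

Lemma jblocks_ge_ext2_jordan_pow2 t k : (0 < t)%N -> (k < 2 ^ t)%N -> (2 ^ t + k < m)%N ->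
  (k <= jblocks_ge U (2 ^ t.+1))%N.
Proof.
move=> t_gt0 kt km; pose v (i : 'I_k) := wedge (2 ^ t + i + 1) (2 ^ t + i + 2).
have d_gt0 : (0 < 2 ^ t.+1)%N by rewrite expn_gt0.
have v_ker i : mxpow Nu (2 ^ t.+1).-1.+1 *m v i = 0.
  by rewrite prednK // Nu_pow2_wedge_eq0 //; move: (ltn_ord i) (expnS 2 t); lia.
rewrite -(prednK d_gt0); apply: leq_trans (jblocks_ge_lower v_ker).
apply: (mxrank_pivot id) => i; have ik := ltn_ord i; have cm : (i.+1 < m)%N by lia.
exists (wedge_idx (ltnSn i) cm); split=> [|j ji].
  by rewrite rows_trE Nu_pow2m1_wedge_pivot ?eqxx ?oner_neq0 //; lia.
by rewrite rows_trE Nu_pow2m1_wedge_pivot ?(ltn_eqF ji) //; [exact: ltnW | lia].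
Qed.

Section TopSpan.
Variable s : nat.
Hypothesis s_gt1 : (1 < s)%N.
Hypothesis m_eq : m = (2 ^ s + 2)%N.
Local Notation h := (2 ^ s)%N.

Lemma h_ge4 : (4 <= h)%N.
Proof. by rewrite -[4%N]/(2 ^ 2)%N leq_pexp2l. Qed.

(* The vectors e_1 /\ e_j (3 <= j <= h), e_2 /\ e_j (4 <= j <= h) and
   e_1 /\ e_(h+2) + e_(h+1) /\ e_2, on which Nu is triangular; together with
   e_1 /\ e_2 and e_2 /\ e_3 they span a space containing the image of Nu^h. *)
Definition top_row (i : nat) : 'cV[K]_N :=
  if (i < h - 2)%N then wedge 1 (i + 3)
  else if (i < 2 * h - 5)%N then wedge 2 (i + 6 - h)
  else wedge 1 (h + 2) + wedge (h + 1) 2.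

Definition top_rows : 'M[K]_(2 * h - 4, N) := \matrix_(i < 2 * h - 4) (top_row i)^T.

Definition top_span : 'M[K]_N := (top_rows + (wedge 1 2)^T + (wedge 2 3)^T)%MS.

Lemma top_row_sub i : (i < 2 * h - 4)%N -> ((top_row i)^T <= top_span)%MS.
Proof.
move=> ih; apply: submx_trans (addsmxSl _ _); apply: submx_trans (addsmxSl _ _).
by rewrite -(rowK (fun i : 'I_(2 * h - 4) => (top_row i)^T) (Ordinal ih)) row_sub.
Qed.

Lemma wedge1_sub y : (1 < y <= h)%N -> ((wedge 1 y)^T <= top_span)%MS.
Proof.
case/andP=> y1 yh; have [->|y2] := eqVneq y 2.
  by apply: submx_trans (addsmxSl _ _); apply: addsmxSr.
have [c1 e] : (y - 3 < h - 2)%N /\ (y - 3 + 3 = y)%N by split; lia.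
by have := @top_row_sub (y - 3); rewrite /top_row c1 e; apply; lia.
Qed.

Lemma wedge2_sub y : (2 < y <= h)%N -> ((wedge 2 y)^T <= top_span)%MS.
Proof.
case/andP=> y2 yh; have [->|y3] := eqVneq y 3; first exact: addsmxSr.
have h4 := h_ge4; set i := (y + h - 6)%N.
have [c1 c2 e] : [/\ (i < h - 2)%N = false, (i < 2 * h - 5)%N & (i + 6 - h = y)%N].
  by rewrite /i; split; lia.
by have := @top_row_sub i; rewrite /top_row c1 c2 e; apply; lia.
Qed.

Lemma Nu_pow2_top_sub : ((mxpow Nu h)^T <= top_span)%MS.
Proof.
apply/row_subP => b; rewrite -tr_col colE -wedge_delta; have h4 := h_ge4.
have := wlo_lt_whi b; have := whi_lt b.
move: (wlo b) (whi b) => x y ym xy; rewrite Nu_pow2_wedge; try lia.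
have [yh|hy] := leqP y.+1 h.
  rewrite (_ : (x.+1 - h = 0)%N) 1?(_ : (y.+1 - h = 0)%N); try lia.
  by rewrite !wedge0l wedge0r !addr0 trmx0; apply: sub0mx.
have [xh|hx] := leqP x.+1 h.
  rewrite (_ : (x.+1 - h = 0)%N) ?wedge0l ?add0r ?addr0; last lia.
  have [->|->] : (y.+1 - h = 1 \/ y.+1 - h = 2)%N by lia.
    case: x xh {xy} => [|x] xh.
      by rewrite wedgexx trmx0; apply: sub0mx.
    by rewrite wedgeC wedge1_sub //; lia.
  case: x xh {xy} => [|[|x]] xh.
  - by apply: wedge1_sub; lia.
  - by rewrite wedgexx trmx0; apply: sub0mx.
  - by rewrite wedgeC wedge2_sub //; lia.
rewrite (_ : (x.+1 - h = 1)%N) 1?(_ : (y.+1 - h = 2)%N); try lia.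
rewrite (_ : (x.+1 = h + 1)%N) 1?(_ : (y.+1 = h + 2)%N); try lia.
rewrite linearD addmx_sub ?wedge1_sub //; last by lia.
have [c1 c2] : (2 * h - 5 < h - 2)%N = false /\ (2 * h - 5 < 2 * h - 5)%N = false.
  by split; lia.
by have := @top_row_sub (2 * h - 5); rewrite /top_row c1 c2; apply; lia.
Qed.

Lemma top_rows_rank : (2 * h - 4 <= \rank (top_rows *m Nu^T))%N.
Proof.
have h4 := h_ge4; rewrite mulmx_rows_tr; apply: (mxrank_pivot id) => /= i.
have ik := ltn_ord i.
pose pc := if (i < h - 2)%N then (0, i.+1)%N
  else if (i < 2 * h - 5)%N then (1, i + 4 - h)%N else (1, h.-1)%N.
have [pq qm] : (pc.1 < pc.2)%N /\ (pc.2 < m)%N.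
  by rewrite /pc; case: ifP => ?; try case: ifP => ?; split=> /=; lia.
have coord j : (j <= i)%N -> (Nu *m top_row j) (wedge_idx pq qm) 0 = (j == i)%:R.
  move=> ji; have [->|ne] := eqVneq j i; rewrite /top_row;
    case: ifP => ?; try case: ifP => ?; rewrite ?mulmxDr !Nu_wedge; try lia;
    rewrite !mxE -!natrD /wedge_hit wlo_wedge_idx whi_wedge_idx /pc;
    case: ifP => ?; try case: ifP => ?; rewrite /=;
    by [exfalso; lia | decide_nat_eqs; rewrite ?andbF].
exists (wedge_idx pq qm); split=> [|j ji].
  by rewrite rows_trE coord // eqxx oner_neq0.
by rewrite rows_trE coord ?(ltn_eqF ji) // ltnW.
Qed.

Lemma jblocks_ge_ext2_jordan_top : (jblocks_ge U h.+1 <= 2)%N.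
Proof.
have rank_span : (\rank top_span <= 2 * h - 4 + 1 + 1)%N.
  rewrite /top_span; apply: leq_trans (mxrank_adds_leqif _ _).1 _.
  apply: leq_add (leq_trans (mxrank_adds_leqif _ _).1 _) (rank_leq_row _).
  exact: leq_add (rank_leq_row _) (rank_leq_row _).
have rank_img : (2 * h - 4 <= \rank (top_span *m Nu^T))%N.
  apply: leq_trans top_rows_rank (mxrankS (submxMr _ _)).
  exact: submx_trans (addsmxSl _ _) (addsmxSl _ _).
apply: leq_trans (jblocks_ge_upper Nu_pow2_top_sub) _; rewrite leq_subLR.
by apply: leq_trans rank_span _; rewrite -addnA leq_add.
Qed.

End TopSpan.

End WedgeJordan.

Lemma exists_pow2_between {m} : (1 < m)%N -> exists s, (2 ^ s < m <= 2 ^ s.+1)%N.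
Proof.
move=> m_gt1; have := up_log_bounds (isT : (1 < 2)%N) m_gt1.
case: (up_log 2 m) => [|s] /andP[lo hi]; first by move: hi; rewrite expn0; lia.
by exists s; rewrite lo hi.
Qed.

Theorem lemma4p10 (K : closedFieldType) (hK : (2 \in [pchar K])%N)
  (n q : nat) (hn : (0 < n)%N) (hq : exists k, q = (2 ^ k)%N) (hqn : (2 * n <= q)%N) :
  (forall d : nat, (0 < d)%N ->
     (jblock_mult (ext2 (jordan_unip K (2 * n))) d <= 2)%N) ->
  n \in [:: 1; 2; 3; 5]%N.
Proof.
move=> mult_le2; have char2 : (2%:R : K) = 0 := pcharf0 hK.
have mult_pow2 s := mult_le2 (2 ^ s)%N (expn_gt0 2 s); rewrite /jblock_mult in mult_pow2.
have [n1|n_gt1] := leqP n 1; first by have -> : n = 1%N by lia.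
have m_gt1 : (1 < 2 * n)%N by lia.
have [[|s] /andP[lo hi]] := exists_pow2_between m_gt1; first by move: hi; rewrite expn1; lia.
have top0 := jblocks_ge_eq0 (Nu_pow2_eq0 char2 hi); have e2 := expnS 2 s.
have [far|near] := leqP (2 ^ s.+1 + 4) (2 * n).
  have low : (3 <= jblocks_ge (ext2 (jordan_unip K (2 * n))) (2 ^ s.+2))%N.
    by apply: (jblocks_ge_ext2_jordan_pow2 char2); move: (expnS 2 s.+1); lia.
  by have := mult_pow2 s.+2; rewrite top0 subn0 => /(leq_trans low).
have n_eq : n = (2 ^ s + 1)%N by lia.
have [s_le2|s_gt2] := leqP s 2.
  by rewrite n_eq; case: s s_le2 {lo hi top0 e2 near n_eq} => [|[|[|]]].
have low : (5 <= jblocks_ge (ext2 (jordan_unip K (2 * n))) (2 ^ s.+1))%N.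
  have pow8 : (8 <= 2 ^ s)%N by rewrite -[8%N]/(2 ^ 3)%N leq_pexp2l.
  by apply: (jblocks_ge_ext2_jordan_pow2 char2); lia.
have up : (jblocks_ge (ext2 (jordan_unip K (2 * n))) (2 ^ s.+1).+1 <= 2)%N.
  by apply: (jblocks_ge_ext2_jordan_top char2); lia.
by have := mult_pow2 s.+1; lia.
Qed.
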